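(* Let $r\ge 2$ and $m$ be integers with $0\le 2m\le r$, $n=2r-4m$, and let $f:S^2(S^r(\mathbb{C}^2))\to S^{n}(\mathbb{C}^2)$ be an $\mathfrak{sl}_2(\mathbb{C})$-equivariant linear map, written $f=\sum_{k=0}^n q_k w_k$, with $\lambda=q_0(x_0x_{2m})\neq 0$. Then for every $0\le k\le n/2$, $$q_k(x_0x_{2m+k})=q_{n-k}(x_rx_{r-2m-k})\neq 0.$$ Moreover, if $m=0$, then for every $0\le k\le n/2$ and every $0\le i\le k$, $$q_k(x_ix_{k-i})=q_{n-k}(x_{r-i}x_{r-k+i})\neq 0.$$
   Context: $\mathfrak{sl}_2(\mathbb{C})$ has basis $X=\begin{pmatrix}0&1\\0&0\end{pmatrix}$, $H=\begin{pmatrix}1&0\\0&-1\end{pmatrix}$, $Y=\begin{pmatrix}0&0\\1&0\end{pmatrix}$, acting on the irreducible modules $S^d(\mathbb{C}^2)$. Let $x_0\in S^r(\mathbb{C}^2)$ be a highest weight vector and $x_i=Y^ix_0/i!$ ($0\le i\le r$), so $Yx_i=(i+1)x_{i+1}$, $Xx_i=(r-i+1)x_{i-1}$, $Hx_i=(r-2i)x_i$. Let $w_0\in S^n(\mathbb{C}^2)$ be a highest weight vector and $w_k=Y^kw_0/k!$ ($0\le k\le n$). Writing $f=\sum_{k=0}^n q_kw_k$ means $f(u)=\sum_k q_k(u)w_k$ for linear forms $q_k$ on $S^2(S^r(\mathbb{C}^2))$; $q_k(x_ix_j)$ is the value on the product $x_ix_j$. *)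

From mathcomp Require Import all_boot all_order all_algebra.
Set Implicit Arguments. Unset Strict Implicit. Unset Printing Implicit Defensive.
Import Order.TTheory GRing.Theory Num.Theory.
Local Open Scope ring_scope.

(* Encoding of a linear map f : S^2(S^r(C^2)) -> S^n(C^2), f = sum_k q_k w_k,
   by its coefficient table  F i j k = q_k(x_i x_j)  (0 <= i,j <= r, 0 <= k <= n).
   Since {x_i x_j | i <= j} is a basis of S^2(S^r(C^2)) and x_i x_j = x_j x_i,
   linear maps f correspond exactly to tables that are symmetric in (i,j). *)

Definition sym_table (C : numClosedFieldType) (r : nat)
    (F : nat -> nat -> nat -> C) : Prop :=
  forall i j k, (i <= r)%N -> (j <= r)%N -> F i j k = F j i k.

(* sl_2-equivariance, checked on the spanning products x_i x_j, using
   Y x_i = (i+1) x_{i+1} (x_{r+1} = 0),   X x_i = (r-i+1) x_{i-1} (x_{-1} = 0),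
   H x_i = (r-2i) x_i, Y acting on S^2 as a derivation, and on the target
   Y w_k = (k+1) w_{k+1}, X w_k = (n-k+1) w_{k-1}, H w_k = (n-2k) w_k.
   Each equation is the coefficient of w_k (0 <= k <= n) of
   f(A (x_i x_j)) = A f(x_i x_j), for A in {Y, X, H}. *)
Definition sl2_equivariant (C : numClosedFieldType) (r n : nat)
    (F : nat -> nat -> nat -> C) : Prop :=
  forall i j k, (i <= r)%N -> (j <= r)%N -> (k <= n)%N ->
  [/\
      (if (i < r)%N then (i.+1)%:R * F i.+1 j k else 0) +
      (if (j < r)%N then (j.+1)%:R * F i j.+1 k else 0)
        = k%:R * F i j k.-1,
      (if (0 < i)%N then (r - i).+1%:R * F i.-1 j k else 0) +
      (if (0 < j)%N then (r - j).+1%:R * F i j.-1 k else 0)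
        = (n - k)%:R * F i j k.+1
    &
      ((r%:R - 2 * i%:R) + (r%:R - 2 * j%:R)) * F i j k
        = (n%:R - 2 * k%:R) * F i j k ].

From mathcomp Require Import all_boot all_order all_algebra.
From mathcomp Require Import zify ring.
Import GRing.Theory Num.Theory.
Local Open Scope ring_scope.

(* Equivariance under X and Y turns suitable strings of coefficients into
   solutions of first-order recurrences with binomial solutions: with N = n/2,
   q_k(x_0 x_{2m+k}) is proportional to 'C(N, k) / 'C(2N, k), and for m = 0
   q_{i+j}(x_i x_j) is proportional to 'C(r, i) 'C(r, j) / 'C(2r, i+j).  The
   mirrored coefficients, read off from x_r and the lowest weights, solve the
   same recurrences.  The symmetry of the table at k = N (respectively the
   first statement at k = 0) matches the two solutions, and the closed forms
   show that they do not vanish. *)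

Section BinomialRecurrences.

Set Implicit Arguments.
Context {R : numDomainType}.
Variable N : nat.

Definition chain_recurrence (a : nat -> R) : Prop :=
  forall k, (k < N)%N -> (N - k)%:R * a k = (2 * N - k)%:R * a k.+1.

Definition triangle_recurrence (P : nat -> nat -> R) : Prop :=
  chain_recurrence (P 0%N) /\
  forall i j, (i + j < N)%N ->
    i.+1%:R * P i.+1 j + j.+1%:R * P i j.+1 = (i + j).+1%:R * P i j.

Lemma natrS_neq0 (k : nat) : k.+1%:R != 0 :> R.
Proof. by rewrite pnatr_eq0. Qed.

Lemma natr_bin_neq0 {p k : nat} : (k <= p)%N -> 'C(p, k)%:R != 0 :> R.
Proof. by move=> le_kp; rewrite pnatr_eq0 -lt0n bin_gt0. Qed.

Lemma natr_mul_bin_left (p k : nat) :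
  k.+1%:R * 'C(p, k.+1)%:R = (p - k)%:R * 'C(p, k)%:R :> R.
Proof. by rewrite -!natrM mul_bin_left. Qed.

Lemma chain_recurrence_binomial (a : nat -> R) :
  chain_recurrence a ->
  forall k, (k <= N)%N -> a k * 'C(2 * N, k)%:R = a 0%N * 'C(N, k)%:R.
Proof.
move=> rec; elim=> [|k IHk] le_kN; first by rewrite !bin0.
apply: (mulfI (natrS_neq0 k)).
transitivity ((2 * N - k)%:R * a k.+1 * 'C(2 * N, k)%:R).
  by rewrite mulrCA natr_mul_bin_left; ring.
rewrite -rec // -mulrA (IHk (ltnW le_kN)) [RHS]mulrCA natr_mul_bin_left; ring.
Qed.

Lemma triangle_recurrence_binomial (P : nat -> nat -> R) :
  triangle_recurrence P ->
  forall i j, (i + j <= N)%N ->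
    P i j * 'C(2 * N, i + j)%:R = P 0%N 0%N * 'C(N, i)%:R * 'C(N, j)%:R.
Proof.
move=> [rec0 rec]; elim=> [|i IHi] j le_ijN.
  by rewrite bin0 mulr1; apply: chain_recurrence_binomial.
have step : i.+1%:R * P i.+1 j = (i + j).+1%:R * P i j - j.+1%:R * P i j.+1.
  by rewrite -rec // addrK.
have IH0 := IHi j (ltnW le_ijN).
have IH1 := IHi j.+1 ltac:(lia); rewrite addnS in IH1.
have split_dim : (2 * N - (i + j))%:R = (N - j)%:R + (N - i)%:R :> R.
  by rewrite -natrD; congr _%:R; lia.
apply: (mulfI (natrS_neq0 i)).
transitivity (P i j * ((i + j).+1%:R * 'C(2 * N, (i + j).+1)%:R)
              - j.+1%:R * (P i j.+1 * 'C(2 * N, (i + j).+1)%:R)).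
  by rewrite [LHS]mulrA step; ring.
rewrite natr_mul_bin_left IH1.
transitivity ((2 * N - (i + j))%:R * (P i j * 'C(2 * N, i + j)%:R)
              - P 0%N 0%N * 'C(N, i)%:R * (j.+1%:R * 'C(N, j.+1)%:R)); first by ring.
rewrite IH0 natr_mul_bin_left split_dim.
transitivity (P 0%N 0%N * ((N - i)%:R * 'C(N, i)%:R) * 'C(N, j)%:R); first by ring.
by rewrite -natr_mul_bin_left; ring.
Qed.

Lemma chain_recurrence_eq (a b : nat -> R) :
  chain_recurrence a -> chain_recurrence b -> a N = b N ->
  forall k, (k <= N)%N -> a k = b k.
Proof.
move=> reca recb abN k le_kN.
have closed_a := chain_recurrence_binomial reca.
have closed_b := chain_recurrence_binomial recb.
have ab0 : a 0%N = b 0%N.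
  by have := closed_a N (leqnn N); rewrite abN closed_b // binn !mulr1.
apply: (mulIf (@natr_bin_neq0 (2 * N) k _)); first lia.
by rewrite closed_a // closed_b // ab0.
Qed.

Lemma chain_recurrence_neq0 (a : nat -> R) :
  chain_recurrence a -> a 0%N != 0 -> forall k, (k <= N)%N -> a k != 0.
Proof.
move=> rec a0_neq0 k le_kN; apply: contraNneq a0_neq0 => ak0.
have := chain_recurrence_binomial rec k le_kN.
by rewrite ak0 mul0r => /esym/eqP; rewrite mulf_eq0 (negbTE (natr_bin_neq0 le_kN)) orbF.
Qed.

Lemma triangle_recurrence_eq (P Q : nat -> nat -> R) :
  triangle_recurrence P -> triangle_recurrence Q -> P 0%N 0%N = Q 0%N 0%N ->
  forall i j, (i + j <= N)%N -> P i j = Q i j.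
Proof.
move=> recP recQ PQ00 i j le_ijN.
apply: (mulIf (@natr_bin_neq0 (2 * N) (i + j) _)); first lia.
by rewrite !triangle_recurrence_binomial // PQ00.
Qed.

Lemma triangle_recurrence_neq0 (P : nat -> nat -> R) :
  triangle_recurrence P -> P 0%N 0%N != 0 ->
  forall i j, (i + j <= N)%N -> P i j != 0.
Proof.
move=> rec P00_neq0 i j le_ijN; apply/eqP => Pij0.
have := triangle_recurrence_binomial rec i j le_ijN; rewrite Pij0 mul0r => /esym/eqP.
rewrite !mulf_eq0 (negbTE P00_neq0) !(negbTE (natr_bin_neq0 _)) //; lia.
Qed.

End BinomialRecurrences.

Section Equivariance.

Set Implicit Arguments.

Variables (C : numClosedFieldType) (r n : nat) (F : nat -> nat -> nat -> C).
Hypothesis equivF : sl2_equivariant r n F.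

Lemma chain_recurrence_low m : (2 * m <= r)%N -> n = (2 * (r - 2 * m))%N ->
  chain_recurrence (r - 2 * m) (fun k => F 0%N (2 * m + k)%N k).
Proof.
move=> le_mr def_n k lt_k /=.
have [_ X _] := equivF 0%N (2 * m + k).+1 k (leq0n r) ltac:(lia) ltac:(lia).
move: X => /=; rewrite add0r addnS -def_n => <-.
by congr (_ * _); congr _%:R; lia.
Qed.

Lemma chain_recurrence_high m : (2 * m <= r)%N -> n = (2 * (r - 2 * m))%N ->
  chain_recurrence (r - 2 * m) (fun k => F r (r - 2 * m - k)%N (n - k)%N).
Proof.
move=> le_mr def_n k lt_k /=.
have [Y _ _] := equivF r (r - 2 * m - k.+1)%N (n - k)%N (leqnn r) ltac:(lia) ltac:(lia).
move: Y; rewrite ltnn add0r ifT; last lia.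
rewrite (_ : (r - 2 * m - k.+1).+1 = r - 2 * m - k)%N; last lia.
rewrite (_ : (n - k).-1 = n - k.+1)%N; last lia.
by rewrite -def_n.
Qed.

Lemma triangle_recurrence_low : n = (2 * r)%N ->
  triangle_recurrence r (fun i j => F i j (i + j)%N).
Proof.
move=> def_n; split.
  by have := @chain_recurrence_low 0%N (leq0n r); rewrite muln0 subn0 => /(_ def_n).
move=> i j lt_ijr /=.
have [Y _ _] := equivF i j (i + j).+1 ltac:(lia) ltac:(lia) ltac:(lia).
by move: Y; rewrite ifT; [rewrite ifT; [rewrite addnS|lia]|lia].
Qed.

Lemma triangle_recurrence_high : n = (2 * r)%N ->
  triangle_recurrence r (fun i j => F (r - i)%N (r - j)%N (n - (i + j))%N).
Proof.
move=> def_n; split.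
  move=> j lt_jr /=; rewrite !subn0 !add0n.
  have := @chain_recurrence_high 0%N (leq0n r); rewrite muln0 !subn0.
  by move=> /(_ def_n j lt_jr).
move=> i j lt_ijr /=.
have [_ X _] := equivF (r - i)%N (r - j)%N (n - (i + j).+1)%N ltac:(lia) ltac:(lia) ltac:(lia).
move: X; rewrite ifT; last lia; rewrite ifT; last lia.
rewrite (_ : r - (r - i) = i)%N; last lia.
rewrite (_ : r - (r - j) = j)%N; last lia.
rewrite (_ : (r - i).-1 = r - i.+1)%N; last lia.
rewrite (_ : (r - j).-1 = r - j.+1)%N; last lia.
rewrite (_ : n - (n - (i + j).+1) = (i + j).+1)%N; last lia.
rewrite (_ : (n - (i + j).+1).+1 = n - (i + j))%N; last lia.
by rewrite addnS.
Qed.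

End Equivariance.

Theorem mainTheorem6 (C : numClosedFieldType) (r m n : nat)
    (F : nat -> nat -> nat -> C) :
  (2 <= r)%N -> (2 * m <= r)%N -> n = (2 * r - 4 * m)%N ->
  sym_table r F -> sl2_equivariant r n F ->
  F 0%N (2 * m)%N 0%N != 0 ->
  (forall k, (2 * k <= n)%N ->
     F 0%N (2 * m + k)%N k = F r (r - 2 * m - k)%N (n - k)%N
     /\ F 0%N (2 * m + k)%N k != 0)
  /\
  (m = 0%N -> forall k i, (2 * k <= n)%N -> (i <= k)%N ->
     F i (k - i)%N k = F (r - i)%N (r - k + i)%N (n - k)%N
     /\ F i (k - i)%N k != 0).
Proof.
move=> _ le_mr def_n symF equivF lambda_neq0.
have def_n' : n = (2 * (r - 2 * m))%N by lia.
have recL := chain_recurrence_low equivF m le_mr def_n'.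
have recH := chain_recurrence_high equivF m le_mr def_n'.
have anchor : F 0%N (2 * m + (r - 2 * m))%N (r - 2 * m)%N
            = F r (r - 2 * m - (r - 2 * m))%N (n - (r - 2 * m))%N.
  by rewrite subnKC // subnn (_ : n - _ = r - 2 * m)%N; [apply: symF | lia].
have part1 k : (k <= r - 2 * m)%N ->
    F 0%N (2 * m + k)%N k = F r (r - 2 * m - k)%N (n - k)%N
    /\ F 0%N (2 * m + k)%N k != 0.
  move=> le_kN; split; first exact: (chain_recurrence_eq recL recH anchor).
  by apply: (chain_recurrence_neq0 recL); rewrite //= addn0.
split=> [k le_kn | m0 k i le_kn le_ik]; first by apply: part1; lia.
subst m; have def_n2 : n = (2 * r)%N by lia.
have recP := triangle_recurrence_low equivF def_n2.
have recQ := triangle_recurrence_high equivF def_n2.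
have PQ00 : F 0%N 0%N (0 + 0)%N = F (r - 0)%N (r - 0)%N (n - (0 + 0))%N.
  by have [] := part1 0%N (leq0n _); rewrite !subn0.
have le_ijr : (i + (k - i) <= r)%N by lia.
rewrite (_ : r - k + i = r - (k - i))%N; last lia.
have := triangle_recurrence_eq recP recQ PQ00 i (k - i) le_ijr.
have := triangle_recurrence_neq0 recP lambda_neq0 i (k - i) le_ijr.
by rewrite /= subnKC.
Qed.
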